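(* Let $\Sigma=\{a,b\}$ with the discrete topology, and let $B$ send a topology $\tau$ on $\Sigma^*$ to the topology generated by the sets $UV$ with $U\subseteq\Sigma$ and $V\in\tau$. Then $B$ is a refinement function over $\Sigma^*$.
   Context: $UV=\{uv:u\in U,v\in V\}$ (concatenation). A topological space is Noetherian if every subset is compact. A refinement function over a set $X$ is a map $R$ from topologies on $X$ to topologies on $X$ that is monotone for inclusion ($\tau\subseteq\tau'\Rightarrow R(\tau)\subseteq R(\tau')$) and sends Noetherian topologies to Noetherian topologies. *)

From Stdlib Require Import List.
Import ListNotations.

Section Topo.
Variable X : Type.

Definition subset (A B : X -> Prop) : Prop := forall x, A x -> B x.

Definition fam_subset (F G : (X -> Prop) -> Prop) : Prop := forall U, F U -> G U.

Definition bigunion (F : (X -> Prop) -> Prop) : X -> Prop :=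
  fun x => exists U, F U /\ U x.

Definition is_topology (tau : (X -> Prop) -> Prop) : Prop :=
  tau (fun _ => True) /\
  (forall F, fam_subset F tau -> tau (bigunion F)) /\
  (forall U V, tau U -> tau V -> tau (fun x => U x /\ V x)).

Definition compact_in (tau : (X -> Prop) -> Prop) (S : X -> Prop) : Prop :=
  forall F, fam_subset F tau -> subset S (bigunion F) ->
  exists l : list (X -> Prop),
    (forall U, In U l -> F U) /\
    subset S (fun x => exists U, In U l /\ U x).

Definition noetherian (tau : (X -> Prop) -> Prop) : Prop :=
  forall S, compact_in tau S.

Definition generated (G : (X -> Prop) -> Prop) : (X -> Prop) -> Prop :=
  fun U => forall t, is_topology t -> fam_subset G t -> t U.

Definition is_refinement_function
  (R : ((X -> Prop) -> Prop) -> ((X -> Prop) -> Prop)) : Prop :=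
  (forall tau, is_topology tau -> is_topology (R tau)) /\
  (forall tau tau', is_topology tau -> is_topology tau' ->
     fam_subset tau tau' -> fam_subset (R tau) (R tau')) /\
  (forall tau, is_topology tau -> noetherian tau -> noetherian (R tau)).
End Topo.

Arguments subset {X}.
Arguments fam_subset {X}.
Arguments bigunion {X}.
Arguments is_topology {X}.
Arguments compact_in {X}.
Arguments noetherian {X}.
Arguments generated {X}.
Arguments is_refinement_function {X}.

Inductive letter : Type := la | lb.
Definition word := list letter.

(* Concatenation UV for U a set of letters (= words of length 1) and V a set of words. *)
Definition concat_letters (U : letter -> Prop) (V : word -> Prop) : word -> Prop :=
  fun w => exists x v, U x /\ V v /\ w = x :: v.

(* B tau = topology generated by the sets UV, U ⊆ Sigma (any subset: Sigma is
   discrete), V ∈ tau. *)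
Definition Bfun (tau : (word -> Prop) -> Prop) : (word -> Prop) -> Prop :=
  generated (fun W => exists (U : letter -> Prop) (V : word -> Prop),
                 tau V /\ W = concat_letters U V).

(* A word is empty or starts with a letter x, and the B(tau)-open sets read
   after the letter x (their residuals by x) are tau-open: this holds for the
   generators UV, whose residual is V or empty, and is preserved by unions and
   intersections.  Hence S is the union of the subsingleton S ∩ {ε} and the
   images under [cons a], [cons b] of its residuals, which are tau-compact
   when tau is Noetherian; continuous images and finite unions of compact sets
   are compact. *)
From Stdlib Require Import List Classical FunctionalExtensionality PropExtensionality.
Import ListNotations.

Lemma set_ext {X} (A B : X -> Prop) : (forall x, A x <-> B x) -> A = B.
Proof.
  intros H; apply functional_extensionality; intros x.
  apply propositional_extensionality, H.
Qed.

Lemma topology_empty {X} (tau : (X -> Prop) -> Prop) :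
  is_topology tau -> tau (fun _ => False).
Proof.
  intros [_ [Hunion _]].
  replace (fun _ : X => False) with (bigunion (fun _ : X -> Prop => False)).
  - apply Hunion; intros _ [].
  - apply set_ext; intros x; split; [intros [_ [[] _]] | intros []].
Qed.

Lemma generated_is_topology {X} (G : (X -> Prop) -> Prop) :
  is_topology (generated G).
Proof.
  split; [|split].
  - intros t [Htop _] _; exact Htop.
  - intros F HF t Ht HG; apply (proj1 (proj2 Ht)).
    intros U HU; apply (HF U HU t Ht HG).
  - intros U V HU HV t Ht HG; apply (proj2 (proj2 Ht)).
    + apply (HU t Ht HG).
    + apply (HV t Ht HG).
Qed.

Lemma generated_min {X} (G t : (X -> Prop) -> Prop) :
  is_topology t -> fam_subset G t -> fam_subset (generated G) t.
Proof. intros Ht HG U HU; apply (HU t Ht HG). Qed.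

Lemma generated_mono {X} (G G' : (X -> Prop) -> Prop) :
  fam_subset G G' -> fam_subset (generated G) (generated G').
Proof.
  intros HGG' U HU t Ht HG'; apply (HU t Ht).
  intros V HV; apply HG', HGG', HV.
Qed.

Lemma preimage_open_is_topology {X Y} (f : X -> Y) (tau : (X -> Prop) -> Prop) :
  is_topology tau -> is_topology (fun W => tau (fun x => W (f x))).
Proof.
  intros Htau; destruct Htau as [Hfull [Hunion Hinter]].
  split; [exact Hfull | split; [|exact (fun U V => Hinter _ _)]].
  intros F HF.
  replace (fun x => bigunion F (f x))
    with (bigunion (fun V => exists W, F W /\ V = fun x => W (f x))).
  - apply Hunion; intros V [W [HW ->]]; apply HF, HW.
  - apply set_ext; intros x; split.
    + intros [V [[W [HW ->]] HWx]]; exists W; auto.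
    + intros [W [HW HWx]]; exists (fun x => W (f x)); eauto.
Qed.

Lemma list_lift {A B} (P : A -> Prop) (g : A -> B) (l : list B) :
  (forall u, In u l -> exists a, P a /\ u = g a) ->
  exists l', (forall a, In a l' -> P a) /\
             (forall u, In u l -> exists a, In a l' /\ u = g a).
Proof.
  induction l as [|u l IH]; intros Hl.
  - exists []; split; intros _ [].
  - destruct (Hl u (or_introl eq_refl)) as [a [Ha ->]].
    destruct IH as [l' [Hl'P Hl'l]]; [intros v Hv; apply Hl; right; exact Hv|].
    exists (a :: l'); split.
    + intros b [<-|Hb]; auto.
    + intros v [<-|Hv]; [exists a; simpl; auto|].
      destruct (Hl'l v Hv) as [b [Hb ->]]; exists b; simpl; auto.
Qed.

Lemma compact_in_image {X Y} (f : X -> Y) (tau : (X -> Prop) -> Prop)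
    (tau' : (Y -> Prop) -> Prop) (S : Y -> Prop) :
  (forall W, tau' W -> tau (fun x => W (f x))) ->
  compact_in tau (fun x => S (f x)) ->
  compact_in tau' (fun y => S y /\ exists x, y = f x).
Proof.
  intros Hcont Hcomp F HF Hcover.
  destruct (Hcomp (fun V => exists W, F W /\ V = fun x => W (f x))) as [l [Hl Hlcover]].
  - intros V [W [HW ->]]; apply Hcont, HF, HW.
  - intros x Hx; destruct (Hcover (f x)) as [W [HW HWx]]; [eauto|].
    exists (fun x => W (f x)); eauto.
  - destruct (list_lift F (fun W x => W (f x)) l Hl) as [l' [Hl'F Hl'l]].
    exists l'; split; [exact Hl'F|].
    intros y [Hy [x ->]].
    destruct (Hlcover x Hy) as [V [HV HVx]].
    destruct (Hl'l V HV) as [W [HW ->]]; eauto.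
Qed.

Lemma compact_in_union {X} (tau : (X -> Prop) -> Prop) (A B : X -> Prop) :
  compact_in tau A -> compact_in tau B -> compact_in tau (fun x => A x \/ B x).
Proof.
  intros HA HB F HF Hcover.
  destruct (HA F HF) as [lA [HlA HAcover]]; [intros x Hx; apply Hcover; auto|].
  destruct (HB F HF) as [lB [HlB HBcover]]; [intros x Hx; apply Hcover; auto|].
  exists (lA ++ lB); split.
  - intros U HU; apply in_app_or in HU as [HU|HU]; auto.
  - intros x [Hx|Hx];
      [destruct (HAcover x Hx) as [U [HU HUx]] | destruct (HBcover x Hx) as [U [HU HUx]]];
      exists U; split; auto; apply in_or_app; auto.
Qed.

Lemma compact_in_subsingleton {X} (tau : (X -> Prop) -> Prop) (S : X -> Prop) :
  (forall x y, S x -> S y -> x = y) -> compact_in tau S.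
Proof.
  intros Hsub F HF Hcover.
  destruct (classic (exists x, S x)) as [[x Hx] | Hempty].
  - destruct (Hcover x Hx) as [W [HW HWx]].
    exists [W]; split.
    + intros U [<-|[]]; exact HW.
    + intros y Hy; rewrite (Hsub y x Hy Hx); exists W; simpl; auto.
  - exists []; split; [intros _ []|].
    intros y Hy; exfalso; apply Hempty; eauto.
Qed.

Lemma concat_letters_cons (U : letter -> Prop) (V : word -> Prop) (x : letter) :
  U x -> (fun v : word => concat_letters U V (x :: v)) = V.
Proof.
  intros Hx; apply set_ext; intros v; split.
  - intros [y [v' [_ [Hv' Heq]]]]; injection Heq as -> ->; exact Hv'.
  - intros Hv; exists x, v; auto.
Qed.

Lemma concat_letters_cons_notin (U : letter -> Prop) (V : word -> Prop) (x : letter) :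
  ~ U x -> (fun v : word => concat_letters U V (x :: v)) = (fun _ => False).
Proof.
  intros Hx; apply set_ext; intros v; split; [|intros []].
  intros [y [v' [Hy [_ Heq]]]]; injection Heq as -> ->; contradiction.
Qed.

Section B.
Variable tau : (word -> Prop) -> Prop.
Hypothesis tau_top : is_topology tau.

Lemma Bfun_cons_open (x : letter) (W : word -> Prop) :
  Bfun tau W -> tau (fun v => W (x :: v)).
Proof.
  apply (generated_min _ (fun W => tau (fun v => W (x :: v)))).
  - exact (preimage_open_is_topology (cons x) tau tau_top).
  - intros W' [U [V [HV ->]]].
    destruct (classic (U x)) as [Hx|Hx].
    + rewrite (concat_letters_cons U V x Hx); exact HV.
    + rewrite (concat_letters_cons_notin U V x Hx); exact (topology_empty tau tau_top).
Qed.

Lemma Bfun_compact_cons (x : letter) (S : word -> Prop) :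
  compact_in tau (fun v => S (x :: v)) ->
  compact_in (Bfun tau) (fun w => S w /\ exists v, w = x :: v).
Proof. apply compact_in_image, Bfun_cons_open. Qed.

Lemma Bfun_noetherian : noetherian tau -> noetherian (Bfun tau).
Proof.
  intros Hnoeth S.
  replace S with (fun w => ((S w /\ w = []) \/ (S w /\ exists v, w = la :: v))
                           \/ (S w /\ exists v, w = lb :: v)).
  - repeat apply compact_in_union; try apply Bfun_compact_cons, Hnoeth.
    apply compact_in_subsingleton; intros w w' [_ ->] [_ ->]; reflexivity.
  - apply set_ext; intros w; split; [intros [[[Hw _]|[Hw _]]|[Hw _]]; exact Hw|].
    intros Hw; destruct w as [|[|] v]; eauto 6.
Qed.

End B.

Theorem mainTheorem8 : is_refinement_function Bfun.
Proof.
  split; [|split].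
  - intros tau _; apply generated_is_topology.
  - intros tau tau' _ _ Hsub; apply generated_mono.
    intros W [U [V [HV ->]]]; exists U, V; auto.
  - exact Bfun_noetherian.
Qed.
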